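(* Every singleton congestion game structure $\mathcal G=(\mathcal R,c,\mathcal S)$ has a monotone equilibrium selection: for each demand vector $\mu\in\mathbb R_+^{\mathcal H}$ one can choose an equilibrium load vector $x(\mu)$ of $(\mathcal G,\mu)$ such that for every resource $r\in\mathcal R$ the map $\mu\mapsto x_r(\mu)$ is nondecreasing with respect to each component $\mu^h$, $h\in\mathcal H$.
   Context: A congestion game structure $\mathcal G=(\mathcal R,c,\mathcal S)$ consists of: a finite set $\mathcal R$ of resources, each $r\in\mathcal R$ with a continuous nondecreasing cost function $c_r:\mathbb R_+\to\mathbb R_+$; and a finite set $\mathcal H$ of commodities, each $h\in\mathcal H$ with a nonempty finite family $\mathcal S^h\subseteq 2^{\mathcal R}$ of feasible strategies. A demand vector $\mu=(\mu^h)_{h\in\mathcal H}\in\mathbb R_+^{\mathcal H}$ defines the game $(\mathcal G,\mu)$. A feasible flow is $f=(f^h_s)$ with $f^h_s\ge0$, $\sum_{s\in\mathcal S^h}f^h_s=\mu^h$; it induces loads $x_r=\sum_h\sum_{s\in\mathcal S^h:r\in s}f^h_s$ and strategy costs $c_s=\sum_{r\in s}c_r(x_r)$. A Wardrop equilibrium is a feasible flow such that for each $h$ there is $\lambda^h$ with $c_s=\lambda^h$ for all $s\in\mathcal S^h$ with $f^h_s>0$ and $c_s\ge\lambda^h$ for all $s\in\mathcal S^h$ with $f^h_s=0$; an equilibrium load vector is the load vector of a Wardrop equilibrium. The structure is a singleton congestion game if every feasible strategy is a single resource, so $\mathcal S^h$ can be identified with a nonempty subset $\mathcal R^h\subseteq\mathcal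 R$. A monotone equilibrium selection (MES) is a choice, for each $\mu\in\mathbb R_+^{\mathcal H}$, of an equilibrium load vector $x(\mu)$ such that each $\mu\mapsto x_r(\mu)$ is nondecreasing in each coordinate $\mu^h$. *)

From HB Require Import structures.
From mathcomp Require Import all_boot all_order all_algebra.
From mathcomp Require Import all_classical all_reals topology normedtype.
Set Implicit Arguments. Unset Strict Implicit. Unset Printing Implicit Defensive.
Import Order.TTheory GRing.Theory Num.Theory numFieldNormedType.Exports.
Local Open Scope ring_scope.
Local Open Scope classical_set_scope.

Section Congestion.
Variables (R : realType) (Res H : finType).

Definition valid_costs (c : Res -> R -> R) : Prop :=
  forall r, [/\ {within [set x : R | 0 <= x], continuous (c r)},
               (forall a b, 0 <= a -> a <= b -> c r a <= c r b)
             & (forall a, 0 <= a -> 0 <= c r a)].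

Definition valid_strategies (S : H -> {set {set Res}}) : Prop :=
  forall h, S h != finset.set0.

Definition singleton_game (S : H -> {set {set Res}}) : Prop :=
  forall h s, s \in S h -> #|s| = 1%N.

Definition nonneg_demand (mu : H -> R) : Prop := forall h, 0 <= mu h.

(* a flow assigns f h s to strategy s of commodity h (only s \in S h matter) *)
Definition feasible_flow (S : H -> {set {set Res}}) (mu : H -> R)
    (f : H -> {set Res} -> R) : Prop :=
  forall h, (forall s, s \in S h -> 0 <= f h s) /\
            \sum_(s in S h) f h s = mu h.

Definition load (S : H -> {set {set Res}}) (f : H -> {set Res} -> R) (r : Res) : R :=
  \sum_(h : H) \sum_(s in S h | r \in s) f h s.

Definition strat_cost (c : Res -> R -> R) (S : H -> {set {set Res}})
    (f : H -> {set Res} -> R) (s : {set Res}) : R :=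
  \sum_(r in s) c r (load S f r).

Definition wardrop_eq (c : Res -> R -> R) (S : H -> {set {set Res}}) (mu : H -> R)
    (f : H -> {set Res} -> R) : Prop :=
  feasible_flow S mu f /\
  forall h, exists lam : R, forall s, s \in S h ->
     (0 < f h s -> strat_cost c S f s = lam) /\
     (f h s = 0 -> lam <= strat_cost c S f s).

Definition eq_load (c : Res -> R -> R) (S : H -> {set {set Res}}) (mu : H -> R)
    (x : Res -> R) : Prop :=
  exists f, wardrop_eq c S mu f /\ forall r, x r = load S f r.

Definition monotone_eq_selection (c : Res -> R -> R) (S : H -> {set {set Res}})
    (x : (H -> R) -> Res -> R) : Prop :=
  (forall mu, nonneg_demand mu -> eq_load c S mu (x mu)) /\
  (forall (r : Res) (h : H) (mu mu' : H -> R),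
     nonneg_demand mu -> nonneg_demand mu' ->
     (forall h', h' != h -> mu h' = mu' h') -> mu h <= mu' h ->
     x mu r <= x mu' r).

End Congestion.

From HB Require Import structures.
From mathcomp Require Import all_boot all_order all_algebra.
From mathcomp Require Import all_classical all_reals all_analysis.
From mathcomp Require Import ring lra.

(* Wardrop equilibria are obtained as minimizers of the Beckmann potential
   sum_r int_0^{x_r} c_r over the compact set of feasible flows.  For each
   demand we select a minimizer whose load vector has least Euclidean norm; its
   loads are unique by strict convexity of the norm.  Adding e/2 |x|^2 to the
   potential makes the costs c_r(x) + e x strictly increasing, and for such costs
   the equilibrium loads of a singleton game are monotone in the demand: compare,
   commodity by commodity, the flow sent to the resources whose load decreased.
   As e -> 0 the regularized minimizers accumulate only at the loads of the
   min-norm minimizer, so monotonicity passes to the limit. *)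

Set Implicit Arguments.
Unset Strict Implicit.
Unset Printing Implicit Defensive.

Import Order.TTheory GRing.Theory Num.Theory numFieldNormedType.Exports.
Local Open Scope ring_scope.
Local Open Scope classical_set_scope.

Section Primitive.
Variable R : realType.
Local Notation mu := (@lebesgue_measure R).
Implicit Types (c P M : R -> R) (a b x : R).

Definition primitive_bounds c P :=
  forall a b, 0 <= a -> a <= b -> (b - a) * c a <= P b - P a <= (b - a) * c b.

Lemma within_nonneg_continuous_ball c x e :
  {within [set y : R | 0 <= y], continuous c} -> 0 <= x -> 0 < e ->
  exists2 d, 0 < d & forall y, 0 <= y -> `|y - x| < d -> `|c y - c x| < e.
Proof.
move=> /subspace_continuousP cc x0 e0.
have /cvgrPdist_lt/(_ e e0)/nbhs_ballP[d d0 xd] := cc x x0.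
by exists d => // y y0 yx; rewrite distrC; apply: xd => //; rewrite /ball /= distrC.
Qed.

Lemma Rintegral_primitive_bounds c :
  {within [set y : R | 0 <= y], continuous c} ->
  (forall a b, 0 <= a -> a <= b -> c a <= c b) ->
  primitive_bounds c (fun x => \int[mu]_(t in `[0, x]) c t).
Proof.
move=> cc cmono a b a0 ab.
have ib : mu.-integrable `[0, b] (EFin \o c).
  apply: continuous_compact_integrable; first exact: segment_compact.
  by apply: continuous_subspaceW cc => y /=; rewrite in_itv /= => /andP[].
rewrite (@Rintegral_itvB _ _ _ _ a ib) ?bnd_simp //.
have iab : mu.-integrable `]a, b] (EFin \o c).
  apply: integrableS ib => //= y /=; rewrite !in_itv /= => /andP[ay ->].
  by rewrite andbT (le_trans a0) // ltW.
have cst_ab k : \int[mu]_(y in `]a, b]) (cst k) y = (b - a) * k.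
  have mab : fine (mu `]a, b]) = b - a.
    rewrite lebesgue_measure_itv /= lte_fin.
    by case: ltP => //= ba; rewrite (@le_anti _ _ a b) ?ab ?ba ?subrr.
  by rewrite Rintegral_cst // mab mulrC.
have icst k : mu.-integrable `]a, b] (EFin \o cst k).
  apply: (@integrableS _ _ _ mu `[a, b]) => //.
    by move=> y /=; rewrite !in_itv /= => /andP[/ltW -> ->].
  apply: continuous_compact_integrable; first exact: segment_compact.
  exact/continuous_subspaceT/cst_continuous.
apply/andP; split; rewrite -cst_ab; apply: le_Rintegral => // y /=;
  rewrite in_itv /= => /andP[ay yb]; apply: cmono => //.
- exact: ltW.
- by rewrite (le_trans a0) // ltW.
Qed.

Lemma increment_bounded_continuous P M :
  {homo M : x y / x <= y} ->
  (forall a b, a <= b -> 0 <= P b - P a <= (b - a) * M b) -> continuous P.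
Proof.
move=> Mmono PM x; apply/cvgrPdist_lt => e e0.
pose K := `|M (x + 1)| + 1.
have K0 : 0 < K by rewrite ltr_pwDr.
have Mle y : y <= x + 1 -> M y <= K.
  by move=> yx; rewrite (le_trans (Mmono _ _ yx)) // (le_trans (ler_norm _)) ?lerDl.
pose d := Num.min 1 (e / K).
have d0 : 0 < d by rewrite lt_min ltr01 divr_gt0.
near=> y.
have xyd : `|x - y| < d by near: y; apply/nbhs_ballP; exists d => // z.
have xy1 : `|x - y| < 1 by apply: lt_le_trans xyd _; rewrite ge_min lexx.
have xyK : `|x - y| * K < e.
  by rewrite -ltr_pdivlMr //; apply: lt_le_trans xyd _; rewrite ge_min lexx orbT.
apply: le_lt_trans xyK.
have [yx|xy] := leP y x.
  have /andP[P0 PM'] := PM y x yx.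
  rewrite ger0_norm // (le_trans PM') // ger0_norm ?subr_ge0 //.
  by rewrite ler_wpM2l ?subr_ge0 // Mle // lerDl.
have /andP[P0 PM'] := PM x y (ltW xy).
have yx : 0 <= y - x by rewrite subr_ge0 ltW.
rewrite distrC ger0_norm // (le_trans PM') // distrC ger0_norm // ler_wpM2l // Mle //.
by move: xy1; rewrite distrC ltr_norml; lra.
Unshelve. all: by end_near.
Qed.

Lemma continuous_primitive_exists c :
  {within [set y : R | 0 <= y], continuous c} ->
  (forall a b, 0 <= a -> a <= b -> c a <= c b) ->
  (forall a, 0 <= a -> 0 <= c a) ->
  exists2 P, primitive_bounds c P & continuous P.
Proof.
move=> cc cmono cpos.
pose I x := \int[mu]_(t in `[0, x]) c t.
have I0 : I 0 = 0 by rewrite /I set_itv1 Rintegral_set1.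
have IB := Rintegral_primitive_bounds cc cmono.
pose P x := if 0 <= x then I x else x * c 0.
have PB : primitive_bounds c P.
  by move=> a b a0 ab; rewrite /P a0 (le_trans a0 ab); exact: IB.
exists P => //; apply: (@increment_bounded_continuous _ (fun x => c (Num.max x 0))).
  by move=> x y xy; apply: cmono; [rewrite le_max lexx orbT | exact: le_max2].
move=> a b ab; have c0 := cpos 0 (lexx 0).
have [a0|a0] := leP 0 a.
  have b0 := le_trans a0 ab.
  have /andP[lo hi] := PB a b a0 ab.
  by rewrite (max_idPl b0) hi andbT (le_trans _ lo) // mulr_ge0 ?subr_ge0 ?cpos.
have Pa : P a = a * c 0 by rewrite /P leNgt a0.
have [b0|b0] := leP 0 b.
  have /andP[lo hi] := PB 0 b (lexx 0) b0.
  have cb : c 0 <= c b by exact: cmono.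
  move: lo hi; rewrite Pa {2 4}/P lexx I0 !subr0 => lo hi.
  apply/andP; split; nra.
have Pb : P b = b * c 0 by rewrite /P leNgt b0.
by rewrite Pb Pa -mulrBl lexx andbT mulr_ge0 // subr_ge0.
Qed.

Definition nonneg_midpoint_convex P :=
  forall a b, 0 <= a -> 0 <= b -> P ((a + b) / 2) <= (P a + P b) / 2.

Lemma primitive_midpoint_convex c P : primitive_bounds c P -> nonneg_midpoint_convex P.
Proof.
move=> PB a b.
wlog ab : a b / a <= b.
  move=> W a0 b0; have [ab|ba] := leP a b; first exact: W.
  by rewrite addrC [X in _ <= X / 2]addrC; apply: W => //; exact: ltW.
move=> a0 b0; have m0 : 0 <= (a + b) / 2 by lra.
have /andP[_ lo] := PB a ((a + b) / 2) a0 ltac:(lra).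
have /andP[hi _] := PB ((a + b) / 2) b m0 ltac:(lra).
have e : (a + b) / 2 - a = b - (a + b) / 2 by field.
rewrite e in lo; lra.
Qed.

Lemma primitive_bounds_add_sq c P e : 0 <= e -> primitive_bounds c P ->
  primitive_bounds (fun x => c x + e * x) (fun x => P x + e / 2 * x ^+ 2).
Proof.
move=> e0 PB a b a0 ab; have /andP[lo hi] := PB a b a0 ab.
have := mulr_ge0 e0 (sqr_ge0 (b - a)).
by move=> sq; apply/andP; split; nra.
Qed.

Lemma exists_descent_step c1 c2 l1 l2 a :
  {within [set y : R | 0 <= y], continuous c1} ->
  {within [set y : R | 0 <= y], continuous c2} ->
  0 <= l1 -> 0 < a -> a <= l2 -> c1 l1 < c2 l2 ->
  exists d, [/\ 0 < d, d <= a & c1 (l1 + d) < c2 (l2 - d)].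
Proof.
move=> cc1 cc2 l10 a0 al2 c12.
pose e := (c2 l2 - c1 l1) / 2.
have e0 : 0 < e by rewrite divr_gt0 // subr_gt0.
have [d1 d10 near1] := within_nonneg_continuous_ball cc1 l10 e0.
have [d2 d20 near2] := within_nonneg_continuous_ball cc2 (ltW (lt_le_trans a0 al2)) e0.
pose d := Num.min (Num.min d1 d2 / 2) a.
have d12 : Num.min d1 d2 / 2 < Num.min d1 d2.
  by rewrite ltr_pdivrMr // ltr_pMr ?ltr1n // lt_min d10.
have dd12 : d < Num.min d1 d2 by apply: le_lt_trans d12; rewrite ge_min lexx.
have d0 : 0 < d by rewrite lt_min divr_gt0 ?lt_min ?d10.
have da : d <= a by rewrite ge_min lexx orbT.
exists d; split => //.
move: dd12; rewrite !lt_min => /andP[dd1 dd2].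
have /near1 : `|l1 + d - l1| < d1 by rewrite addrAC subrr add0r gtr0_norm.
have /near2 : `|l2 - d - l2| < d2 by rewrite addrAC subrr add0r normrN gtr0_norm.
have l2d : 0 <= l2 - d by lra.
move=> /(_ l2d) + /(_ (addr_ge0 l10 (ltW d0))).
rewrite !ltr_norml /e; lra.
Qed.

End Primitive.

Section SingletonEquilibria.
Variables (R : realType) (Res H : finType) (S : H -> {set {set Res}}).
Hypothesis S_singleton : singleton_game S.
Implicit Types (c : Res -> R -> R) (f g : H -> {set Res} -> R) (mu : H -> R)
  (D : {set Res}).

Lemma singleton_strategyP h s : s \in S h -> exists r, s = [set r]%SET.
Proof. by move=> sS; apply/cards1P; rewrite (S_singleton sS). Qed.

Lemma strat_cost_set1 c f r : strat_cost c S f [set r]%SET = c r (load S f r).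
Proof. by rewrite /strat_cost big_set1. Qed.

Lemma feasible_flow_ge0 mu f h s : feasible_flow S mu f -> s \in S h -> 0 <= f h s.
Proof. by move=> ff; case: (ff h) => + _; apply. Qed.

Lemma load_ge0 mu f r : feasible_flow S mu f -> 0 <= load S f r.
Proof.
move=> ff; apply: sumr_ge0 => h _; apply: sumr_ge0 => s /andP[sS _].
exact: feasible_flow_ge0 ff sS.
Qed.

Lemma flow_le_load mu f h s r : feasible_flow S mu f ->
  s \in S h -> r \in s -> f h s <= load S f r.
Proof.
move=> ff sS rs; rewrite /load (bigD1 h) //= (bigD1 s) ?sS ?rs //=.
rewrite -addrA lerDl addr_ge0 //.
  by apply: sumr_ge0 => t /andP[/andP[tS _] _]; exact: feasible_flow_ge0 ff tS.
apply: sumr_ge0 => h' _; apply: sumr_ge0 => t /andP[tS _].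
exact: feasible_flow_ge0 ff tS.
Qed.

Lemma wardrop_eq_min_cost c mu f h : wardrop_eq c S mu f -> exists lam,
  (forall s, s \in S h -> lam <= strat_cost c S f s) /\
  (forall s, s \in S h -> 0 < f h s -> strat_cost c S f s = lam).
Proof.
move=> [ff /(_ h)[lam Hlam]]; exists lam; split => s sS; last by case: (Hlam s sS).
have [used unused] := Hlam s sS.
have := feasible_flow_ge0 ff sS; rewrite le_eqVlt => /predU1P[/esym|/used ->//].
exact: unused.
Qed.

Definition flow_through f h (D : {set Res}) := \sum_(s in S h | s \subset D) f h s.

Lemma sum_load_flow_through f D :
  \sum_(r in D) load S f r = \sum_h flow_through f h D.
Proof.
rewrite /load exchange_big /=; apply: eq_bigr => h _.
rewrite /flow_through (exchange_big_dep (fun s => s \in S h)) /=; last first.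
  by move=> r s _ /andP[].
rewrite big_mkcond [RHS]big_mkcond /=; apply: eq_bigr => s _.
case: ifP => // sS; have [r s_r] := singleton_strategyP sS; rewrite s_r in sS *.
rewrite finset.sub1set; case: (boolP (r \in D)) => rD.
  rewrite (big_pred1 r) // => r' /=; rewrite sS inE.
  by case: eqVneq => [->|]; rewrite ?rD ?andbF.
rewrite big1 // => r' /andP[r'D]; rewrite inE => /andP[_ /eqP rr].
by move: rD; rewrite -rr r'D.
Qed.

Lemma flow_through_ge0 mu f h D : feasible_flow S mu f -> 0 <= flow_through f h D.
Proof.
by move=> ff; apply: sumr_ge0 => s /andP[sS _]; exact: feasible_flow_ge0 ff sS.
Qed.

Lemma flow_through_le_demand mu f h D :
  feasible_flow S mu f -> flow_through f h D <= mu h.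
Proof.
move=> ff; have [f0 <-] := ff h; rewrite /flow_through big_mkcondr /=.
by apply: ler_sum => s sS; case: ifP => // _; exact: f0.
Qed.

Section Monotonicity.
Variables (c : Res -> R -> R) (mu mu' : H -> R) (f g : H -> {set Res} -> R).
Hypothesis c_increasing : forall r a b, 0 <= a -> a < b -> c r a < c r b.
Hypotheses (f_eq : wardrop_eq c S mu f) (g_eq : wardrop_eq c S mu' g).
Hypothesis mu_le : forall h, mu h <= mu' h.

Let overloaded := [set r | load S g r < load S f r]%SET.

Lemma c_nondecreasing r a b : 0 <= a -> a <= b -> c r a <= c r b.
Proof. by move=> a0; rewrite le_eqVlt => /predU1P[->//|/(c_increasing r a0)/ltW]. Qed.

(* If [f] sends flow of [h] into an overloaded resource, its cost level for [h]
   exceeds that of [g], so [g] routes all of [h] through overloaded resources. *)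
Lemma flow_through_overloaded h :
  flow_through f h overloaded <= flow_through g h overloaded.
Proof.
have [ff _] := f_eq; have [fg _] := g_eq.
have [lf [lf_le lf_eq]] := wardrop_eq_min_cost h f_eq.
have [lg [lg_le lg_eq]] := wardrop_eq_min_cost h g_eq.
have [[s sS /andP[sD fs0]]|unused] :=
  pselect (exists2 s, s \in S h & (s \subset overloaded) && (0 < f h s)); last first.
  suff -> : flow_through f h overloaded = 0 by exact: flow_through_ge0 h _ fg.
  apply: big1 => s /andP[sS sD]; apply/eqP; rewrite eq_le (feasible_flow_ge0 ff sS) andbT.
  by rewrite leNgt; apply/negP => fs0; apply: unused; exists s; rewrite ?sD.
have [r1 s_r1] := singleton_strategyP sS.
have lg_lf : lg < lf.
  move: sD; rewrite s_r1 finset.sub1set inE => r1D.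
  rewrite -(lf_eq s sS fs0) s_r1 strat_cost_set1.
  apply: le_lt_trans (c_increasing r1 (load_ge0 r1 fg) r1D).
  by rewrite -strat_cost_set1 -s_r1 lg_le.
have -> : flow_through g h overloaded = mu' h.
  have [g0 <-] := fg h; rewrite /flow_through big_mkcondr /=.
  apply: eq_bigr => t tS; case: ifPn => // tD.
  have [r2 t_r2] := singleton_strategyP tS; apply/eqP; rewrite eq_le g0 //= leNgt.
  apply/negP => gt0.
  move: tD; rewrite t_r2 finset.sub1set inE -leNgt.
  move=> /(c_nondecreasing r2 (load_ge0 r2 ff)).
  rewrite -!strat_cost_set1 -t_r2 (lg_eq t tS gt0) => lf_lg.
  by have := le_lt_trans (le_trans (lf_le t tS) lf_lg) lg_lf; rewrite ltxx.
exact: le_trans (flow_through_le_demand h _ ff) (mu_le h).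
Qed.

Lemma wardrop_load_mono r : load S f r <= load S g r.
Proof.
rewrite leNgt; apply/negP => r_over.
have : \sum_(r in overloaded) load S g r < \sum_(r in overloaded) load S f r.
  apply: ltr_sum; last by move=> r'; rewrite inE.
  by apply/hasP; exists r; rewrite ?mem_index_enum // inE.
rewrite !sum_load_flow_through; apply/negP; rewrite -leNgt.
apply: ler_sum => h _; exact: flow_through_overloaded.
Qed.

End Monotonicity.
End SingletonEquilibria.

Section Potential.
Variables (R : realType) (Res H : finType) (S : H -> {set {set Res}}).
Implicit Types (c P : Res -> R -> R) (f g : H -> {set Res} -> R) (mu : H -> R).

Definition potential P f := \sum_r P r (load S f r).

(* The upper bound is implied by feasibility for the strategies in [S h]; it
   makes the set of such flows compact. *)
Definition bounded_flow mu f :=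
  (forall h s, 0 <= f h s <= \sum_h' mu h') /\ (forall h, \sum_(s in S h) f h s = mu h).

Lemma bounded_flow_feasible mu f : bounded_flow mu f -> feasible_flow S mu f.
Proof. by move=> [box sum] h; split => // s _; case/andP: (box h s). Qed.

Definition shift_flow f h s t d : H -> {set Res} -> R :=
  fun h' s' => f h' s' + d * ((h', s') == (h, t))%:R - d * ((h', s') == (h, s))%:R.

Lemma load_indicator h t x : t \in S h ->
  load S (fun h' s' => ((h', s') == (h, t))%:R : R) x = (x \in t)%:R.
Proof.
move=> tS; rewrite /load (bigD1 h) //= [X in _ + X]big1 ?addr0; last first.
  by move=> h' h'h; apply: big1 => s _; rewrite xpair_eqE (negbTE h'h).
have [xt|xt] := boolP (x \in t).
  rewrite (bigD1 t) ?tS ?xt //= eqxx big1 ?addr0 // => s /andP[_ st].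
  by rewrite xpair_eqE eqxx (negbTE st).
rewrite big1 // => s /andP[_ xs]; rewrite xpair_eqE eqxx /=.
by case: eqVneq xs => // ->; rewrite (negbTE xt).
Qed.

Lemma load_shift_flow f h s t d x : s \in S h -> t \in S h ->
  load S (shift_flow f h s t d) x = load S f x + d * (x \in t)%:R - d * (x \in s)%:R.
Proof.
move=> sS tS; rewrite -(load_indicator x sS) -(load_indicator x tS) /load.
rewrite !mulr_sumr -big_split -sumrB /=; apply: eq_bigr => h' _.
by rewrite !mulr_sumr -big_split -sumrB.
Qed.

Lemma shift_flow_bounded mu f h s t d : bounded_flow mu f ->
  s \in S h -> t \in S h -> s != t -> 0 <= d <= f h s ->
  bounded_flow mu (shift_flow f h s t d).
Proof.
move=> [box sum] sS tS st /andP[d0 dfs]; split => [h' s'|h']; rewrite /shift_flow.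
  have [[-> ->]|ht] := eqVneq (h', s') (h, t).
    rewrite xpair_eqE eqxx eq_sym (negbTE st) /= mulr1 mulr0 subr0.
    have [/andP[ft0 _] /andP[fs0 _]] := (box h t, box h s).
    have : f h s + f h t <= mu h.
      rewrite -sum (bigD1 s) //= (bigD1 t) /=; last by rewrite tS eq_sym.
      by rewrite addrA lerDl sumr_ge0 // => u _; case/andP: (box h u).
    have : mu h <= \sum_h' mu h'.
      rewrite (bigD1 h) //= lerDl sumr_ge0 // => h'' _.
      by rewrite -sum sumr_ge0 // => u _; case/andP: (box h'' u).
    by move=> ? ?; apply/andP; split; lra.
  rewrite mulr0 addr0; have [[-> ->]|hs] := eqVneq (h', s') (h, s).
    by rewrite mulr1; have /andP[_ fs] := box h s; apply/andP; split; lra.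
  by rewrite mulr0 subr0 box.
rewrite sumrB big_split /= -!mulr_sumr sum.
suff ind t' :
    t' \in S h -> \sum_(s' in S h') ((h', s') == (h, t'))%:R = (h' == h)%:R :> R.
  by rewrite !ind // addrK.
move=> t'S; have [->|h'h] := eqVneq h' h; last first.
  by apply: big1 => s' _; rewrite xpair_eqE (negbTE h'h).
rewrite (bigD1 t') //= eqxx big1 ?addr0 // => s' /andP[_ s't'].
by rewrite xpair_eqE eqxx (negbTE s't').
Qed.

Lemma potential_shift_flow P f h r r' d : r != r' ->
  [set r]%SET \in S h -> [set r']%SET \in S h ->
  potential P (shift_flow f h [set r]%SET [set r']%SET d) =
  potential P f + (P r' (load S f r' + d) - P r' (load S f r'))
                + (P r (load S f r - d) - P r (load S f r)).
Proof.
move=> rr' rS r'S; rewrite /potential.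
under eq_bigr do rewrite load_shift_flow // !inE.
rewrite (bigD1 r) //= (bigD1 r') 1?eq_sym //=.
rewrite [in RHS](bigD1 r) //= [in RHS](bigD1 r') 1?eq_sym //=.
rewrite !eqxx (negbTE rr') !mulr0 !mulr1 addr0 subr0.
rewrite (eq_bigr (fun x => P x (load S f x))); last first.
  by move=> x /andP[xr xr']; rewrite (negbTE xr) (negbTE xr') !mulr0 addr0 subr0.
lra.
Qed.

Lemma potential_minimizer_wardrop c P mu f :
  singleton_game S -> valid_strategies S -> valid_costs c ->
  (forall r, primitive_bounds (c r) (P r)) ->
  bounded_flow mu f -> (forall g, bounded_flow mu g -> potential P f <= potential P g) ->
  wardrop_eq c S mu f.
Proof.
move=> S_singleton S_nonempty cvalid PB fK fmin.
have ff := bounded_flow_feasible fK; split => // h.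
have /set0Pn[s0 s0S] := S_nonempty h.
have [s1 s1S s1min] := arg_minP (strat_cost c S f) s0S.
exists (strat_cost c S f s1) => s sS; split => [fs0|]; last by move=> _; exact: s1min.
apply/eqP; rewrite eq_le s1min // andbT leNgt; apply/negP => cost_lt.
have [r s_r] := singleton_strategyP S_singleton sS.
have [r' s1_r'] := singleton_strategyP S_singleton s1S.
have rr' : r != r' by apply: contraTneq cost_lt => rr'; rewrite s_r s1_r' rr' ltxx.
have s_s1 : s != s1 by rewrite s_r s1_r' (inj_eq set1_inj).
move: cost_lt; rewrite s_r s1_r' !strat_cost_set1 => cost_lt.
have [[cc' _ _] [cc _ _]] := (cvalid r', cvalid r).
have fs_load : f h s <= load S f r by apply: flow_le_load ff sS _; rewrite s_r set11.
have [d [d0 dfs desc]] := exists_descent_step cc' cc (load_ge0 r' ff) fs0 fs_load cost_lt.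
have := fmin _ (shift_flow_bounded fK sS s1S s_s1 (introT andP (conj (ltW d0) dfs))).
rewrite s_r s1_r' potential_shift_flow -?s_r -?s1_r' //.
set l := load S f r in fs_load desc *; set l' := load S f r' in desc *.
have /andP[_ up] := PB r' l' (l' + d) (load_ge0 r' ff) ltac:(lra).
have /andP[lo _] := PB r (l - d) l ltac:(lra) ltac:(lra).
have E1 : l' + d - l' = d by ring.
have E2 : l - (l - d) = d by ring.
rewrite E1 in up; rewrite E2 in lo.
have : d * (c r' (l' + d) - c r (l - d)) < 0 by rewrite pmulr_rlt0 // subr_lt0.
lra.
Qed.

End Potential.

Section Topology.
Variable R : realType.

Lemma closed_preimage_continuous (T U : topologicalType) (phi : T -> U) (A : set U) :
  continuous phi -> closed A -> closed (phi @^-1` A).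
Proof. by move=> cphi; apply: preimage_closed => x _; exact: cphi. Qed.

Lemma closed_sublevel (T : topologicalType) (phi : T -> R) a :
  continuous phi -> closed [set x | phi x <= a].
Proof. by move=> cphi; exact: (closed_preimage_continuous cphi (@closed_le _ a)). Qed.

Lemma closed_superlevel (T : topologicalType) (phi : T -> R) a :
  continuous phi -> closed [set x | a <= phi x].
Proof. by move=> cphi; exact: (closed_preimage_continuous cphi (@closed_ge _ a)). Qed.

Lemma closed_level (T : topologicalType) (phi : T -> R) a :
  continuous phi -> closed [set x | phi x = a].
Proof. by move=> cphi; exact: (closed_preimage_continuous cphi (@closed_eq _ a)). Qed.

Lemma continuous_sum (T : topologicalType) (I : Type) (r : seq I) (p : pred I)
    (F : I -> T -> R) :
  (forall i, p i -> continuous (F i)) -> continuous (fun x => \sum_(i <- r | p i) F i x).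
Proof. by apply: continuous_big; exact: add_continuous. Qed.

Lemma compact_continuous_argmin (T : topologicalType) (A : set T) (phi : T -> R) :
  A !=set0 -> compact A -> continuous phi ->
  exists2 w, A w & forall v, A v -> phi w <= phi v.
Proof.
move=> A0 cA cphi.
have [w wA wmin] := compact_EVT_min A0 cA (continuous_subspaceT cphi).
by exists w => [|v vA]; [rewrite -in_setE | apply: wmin; rewrite in_setE].
Qed.

Lemma fst_continuous (T U : topologicalType) : continuous (@fst T U).
Proof. by move=> [x y]; exact: cvg_fst. Qed.

Lemma snd_continuous (T U : topologicalType) : continuous (@snd T U).
Proof. by move=> [x y]; exact: cvg_snd. Qed.

Lemma compact_filter_cluster (T : topologicalType) (F : set_system T) (K : set T) :
  ProperFilter F -> compact K -> F K ->
  exists2 p, K p & forall A, closed A -> F A -> A p.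
Proof.
move=> PF cK FK; have [p [Kp]] := cK F PF FK.
by rewrite clusterE => pF; exists p => // A cA FA; apply: cA; exact: pF.
Qed.

End Topology.

Section FlowSpace.
Variables (R : realType) (Res H : finType) (S : H -> {set {set Res}}).
Local Notation V := 'rV[R]_#|{: H * {set Res}}|.
Implicit Types (c P : Res -> R -> R) (f : H -> {set Res} -> R) (mu : H -> R) (v : V).

Definition flow_of v : H -> {set Res} -> R := fun h s => v ord0 (enum_rank (h, s)).

Definition vec_of_flow f : V := \row_i f (enum_val i).1 (enum_val i).2.

Lemma vec_of_flowK : cancel vec_of_flow flow_of.
Proof.
by move=> f; apply/funext => h; apply/funext => s; rewrite /flow_of mxE enum_rankK.
Qed.

Lemma load_continuous r : continuous (fun v : V => load S (flow_of v) r).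
Proof.
apply: continuous_sum => h _; apply: continuous_sum => s _.
exact: coord_continuous.
Qed.

Lemma potential_continuous P :
  (forall r, continuous (P r)) -> continuous (fun v : V => potential S P (flow_of v)).
Proof.
move=> Pc; apply: continuous_sum => r _ v.
by apply: continuous_comp; [exact: load_continuous | exact: Pc].
Qed.

Definition flow_set mu : set V := [set v | bounded_flow S mu (flow_of v)].

Lemma flow_set_compact mu : compact (flow_set mu).
Proof.
pose B := \sum_h mu h.
have -> : flow_set mu =
    \bigcap_(i in [set: 'I_#|{: H * {set Res}}|])
      ([set v : V | 0 <= v ord0 i] `&` [set v | v ord0 i <= B]) `&`
    \bigcap_(h in [set: H]) [set v : V | \sum_(s in S h) flow_of v h s = mu h].
  apply/seteqP; split => v [box sum].
    split => [i _|h _] /=; last exact: sum.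
    by have := box (enum_val i).1 (enum_val i).2;
      rewrite /flow_of -surjective_pairing enum_valK => /andP.
  split => [h s|h]; last exact: sum h I.
  by have [/= -> ->] := box (enum_rank (h, s)) I.
apply: (@subclosed_compact _ _ [set v : V | forall i, `[0, B] (v ord0 i)]).
- apply: closedI.
    apply: closed_bigI => i _; apply: closedI.
      exact/closed_superlevel/coord_continuous.
    exact/closed_sublevel/coord_continuous.
  apply: closed_bigI => h _; apply: closed_level.
  by apply: continuous_sum => s _; exact: coord_continuous.
- by apply: (@rV_compact _ _ (fun _ => `[0, B])) => i; exact: segment_compact.
- by move=> v [box _] i; have [/= ? ?] := box i I; rewrite in_itv /=; apply/andP.
Qed.

Lemma flow_set_nonempty mu :
  valid_strategies S -> nonneg_demand mu -> flow_set mu !=set0.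
Proof.
move=> S_nonempty mu0.
have /choice[s0 s0S] : forall h, exists s, s \in S h.
  by move=> h; have /set0Pn := S_nonempty h.
exists (vec_of_flow (fun h s => if s == s0 h then mu h else 0)).
rewrite /flow_set /= vec_of_flowK; split => [h s|h].
  case: eqP => _; last by rewrite lexx sumr_ge0.
  by rewrite mu0 (bigD1 h) //= lerDl sumr_ge0.
by rewrite (bigD1 (s0 h)) //= eqxx big1 ?addr0 // => s /andP[_ /negbTE ->].
Qed.

Definition potential_minimizer P mu v :=
  flow_set mu v /\
  forall v', flow_set mu v' -> potential S P (flow_of v) <= potential S P (flow_of v').

Lemma potential_minimizer_exists P mu : valid_strategies S ->
  (forall r, continuous (P r)) -> nonneg_demand mu ->
  exists v, potential_minimizer P mu v.
Proof.
move=> S_nonempty Pc mu0.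
have [v vK vmin] := compact_continuous_argmin (flow_set_nonempty S_nonempty mu0)
  (@flow_set_compact mu) (potential_continuous Pc).
by exists v.
Qed.

Lemma potential_minimizer_wardrop_eq c P mu v :
  singleton_game S -> valid_strategies S -> valid_costs c ->
  (forall r, primitive_bounds (c r) (P r)) ->
  potential_minimizer P mu v -> wardrop_eq c S mu (flow_of v).
Proof.
move=> S_singleton S_nonempty cvalid PB [vK vmin].
apply: potential_minimizer_wardrop => // g gK.
by rewrite -[g]vec_of_flowK; apply: vmin; rewrite /flow_set /= vec_of_flowK.
Qed.

End FlowSpace.

Section MinNormSelection.
Variables (R : realType) (Res H : finType) (S : H -> {set {set Res}}).
Local Notation V := 'rV[R]_#|{: H * {set Res}}|.
Implicit Types (c P : Res -> R -> R) (f g : H -> {set Res} -> R) (mu : H -> R) (v w : V).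

Definition load_norm f := potential S (fun _ x => x ^+ 2) f.

Lemma load_norm_ge0 f : 0 <= load_norm f.
Proof. by apply: sumr_ge0 => r _; exact: sqr_ge0. Qed.

Lemma load_norm_continuous : continuous (fun v : V => load_norm (flow_of v)).
Proof. by apply: potential_continuous => r; exact: exprn_continuous. Qed.

Definition min_norm_minimizer P mu v :=
  potential_minimizer S P mu v /\
  forall v', potential_minimizer S P mu v' ->
    load_norm (flow_of v) <= load_norm (flow_of v').

Lemma min_norm_minimizer_exists P mu : valid_strategies S ->
  (forall r, continuous (P r)) -> nonneg_demand mu -> exists v, min_norm_minimizer P mu v.
Proof.
move=> S_nonempty Pc mu0.
have [w0 [w0K w0min]] := potential_minimizer_exists S_nonempty Pc mu0.
pose Phi v := potential S P (flow_of v).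
have [w [wK wPhi] wmin] : exists2 w, (flow_set S mu `&` [set v | Phi v <= Phi w0]) w &
    forall v, (flow_set S mu `&` [set v | Phi v <= Phi w0]) v ->
      load_norm (flow_of w) <= load_norm (flow_of v).
  apply: compact_continuous_argmin load_norm_continuous.
    by exists w0; split => //=; exact: lexx.
  apply: compact_closedI; first exact: flow_set_compact.
  exact/closed_sublevel/potential_continuous.
exists w; split => [|v [vK vmin]]; last by apply: wmin; split => //; exact: vmin.
by split => // v vK; apply: le_trans wPhi (w0min v vK).
Qed.

Lemma load_midpoint f g r :
  load S (fun h s => (f h s + g h s) / 2) r = (load S f r + load S g r) / 2.
Proof.
rewrite /load -big_split /= mulr_suml; apply: eq_bigr => h _.
by rewrite -big_split /= mulr_suml.
Qed.

Lemma sqr_midpoint_le (a b : R) : ((a + b) / 2) ^+ 2 <= (a ^+ 2 + b ^+ 2) / 2.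
Proof. by have := sqr_ge0 (a - b); nra. Qed.

Lemma sqr_midpoint_lt (a b : R) : a != b -> ((a + b) / 2) ^+ 2 < (a ^+ 2 + b ^+ 2) / 2.
Proof.
move=> ab; have : 0 < (a - b) ^+ 2 by rewrite exprn_even_gt0 // subr_eq0.
nra.
Qed.

(* The potential is convex and the load norm strictly convex in the loads, so a
   second candidate would make their midpoint a minimizer of smaller norm. *)
Lemma min_norm_minimizer_load_eq P mu w u :
  (forall r, nonneg_midpoint_convex (P r)) ->
  min_norm_minimizer P mu w -> flow_set S mu u ->
  potential S P (flow_of u) <= potential S P (flow_of w) ->
  load_norm (flow_of u) <= load_norm (flow_of w) ->
  forall r, load S (flow_of u) r = load S (flow_of w) r.
Proof.
move=> Pconv [[wK wmin] wnorm] uK uPhi unorm r0.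
apply/eqP/negP => /negP ne.
pose z := vec_of_flow (fun h s => (flow_of u h s + flow_of w h s) / 2).
have [[ubox usum] [wbox wsum]] := (uK, wK).
have zK : flow_set S mu z.
  rewrite /flow_set /= vec_of_flowK; split => [h s|h].
    have /andP[? ?] := ubox h s; have /andP[? ?] := wbox h s.
    by apply/andP; split; lra.
  by rewrite -mulr_suml big_split /= usum wsum; lra.
have lu0 r := load_ge0 r (bounded_flow_feasible uK).
have lw0 r := load_ge0 r (bounded_flow_feasible wK).
have zmin : potential_minimizer S P mu z.
  split => // v vK; apply: le_trans (wmin v vK).
  apply: le_trans (_ : (potential S P (flow_of u) + potential S P (flow_of w)) / 2 <= _);
    last by lra.
  rewrite /potential vec_of_flowK -big_split mulr_suml; apply: ler_sum => r _.
  by rewrite load_midpoint; exact: Pconv.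
have := wnorm z zmin; apply/negP; rewrite -ltNge.
apply: lt_le_trans (_ : _ < (load_norm (flow_of u) + load_norm (flow_of w)) / 2) _;
  last by lra.
rewrite /load_norm /potential vec_of_flowK -big_split mulr_suml.
rewrite (bigD1 r0) //= [X in _ < X](bigD1 r0) //= load_midpoint.
apply: ltr_leD; first exact: sqr_midpoint_lt.
by apply: ler_sum => r _; rewrite load_midpoint; exact: sqr_midpoint_le.
Qed.

Definition reg_cost c e : Res -> R -> R := fun r x => c r x + e * x.
Definition reg_prim P e : Res -> R -> R := fun r x => P r x + e / 2 * x ^+ 2.

Lemma potential_reg_prim P e f :
  potential S (reg_prim P e) f = potential S P f + e / 2 * load_norm f.
Proof. by rewrite /potential big_split /= mulr_sumr. Qed.

Lemma reg_prim_continuous P e :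
  (forall r, continuous (P r)) -> forall r, continuous (reg_prim P e r).
Proof.
move=> Pc r; have -> : reg_prim P e r = P r + cst (e / 2) \* (fun x => x ^+ 2).
  by apply/funext.
move=> x; apply: continuousD; first exact: Pc.
by apply: continuousM; [exact: cst_continuous | exact: exprn_continuous].
Qed.

Lemma reg_cost_valid c e : 0 <= e -> valid_costs c -> valid_costs (reg_cost c e).
Proof.
move=> e0 cvalid r; have [cc cmono cpos] := cvalid r; split.
- have -> : reg_cost c e r = c r + *%R e by apply/funext.
  move=> x; apply: continuousD; first exact: cc.
  by apply: continuous_subspaceT => y; exact: mulrl_continuous.
- by move=> a b a0 ab; apply: lerD; [exact: cmono | exact: ler_wpM2l].
- by move=> a a0; rewrite addr_ge0 ?mulr_ge0 ?cpos.
Qed.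

Lemma reg_cost_increasing c e r a b : 0 < e -> valid_costs c ->
  0 <= a -> a < b -> reg_cost c e r a < reg_cost c e r b.
Proof.
move=> e0 cvalid a0 ab; have [_ cmono _] := cvalid r.
by apply: ler_ltD; [exact/cmono/ltW | rewrite ltr_pM2l].
Qed.

Lemma reg_minimizer_bounds P mu w v e : 0 < e ->
  min_norm_minimizer P mu w -> potential_minimizer S (reg_prim P e) mu v ->
  load_norm (flow_of v) <= load_norm (flow_of w) /\
  potential S P (flow_of v) <= potential S P (flow_of w) + e / 2 * load_norm (flow_of w).
Proof.
move=> e0 [[wK wmin] _] [vK vmin].
have := vmin w wK; rewrite !potential_reg_prim => reg_le.
have := wmin v vK; have := load_norm_ge0 (flow_of v); have := load_norm_ge0 (flow_of w).
have e2 : 0 < e / 2 by rewrite divr_gt0.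
move=> nw nv Phi_le; split; last by nra.
by rewrite -(ler_pM2l e2); lra.
Qed.

Lemma reg_minimizers_cluster_loads P mu w (v : R -> V) p :
  (forall r, continuous (P r)) -> (forall r, nonneg_midpoint_convex (P r)) ->
  min_norm_minimizer P mu w ->
  (forall e, 0 < e -> potential_minimizer S (reg_prim P e) mu (v e)) ->
  flow_set S mu p -> (forall A, closed A -> (\forall e \near 0^'+, A (v e)) -> A p) ->
  forall r, load S (flow_of p) r = load S (flow_of w) r.
Proof.
move=> Pc Pconv wmin vmin pK p_adh.
have nw := load_norm_ge0 (flow_of w).
apply: (min_norm_minimizer_load_eq Pconv wmin pK).
  apply/ler_addgt0Pr => d d0.
  apply: (p_adh [set q | potential S P (flow_of q) <= potential S P (flow_of w) + d]).
    exact/closed_sublevel/potential_continuous.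
  have b0 : 0 < d / (load_norm (flow_of w) + 1) by rewrite divr_gt0 // ltr_pwDr.
  near=> e.
  have e0 : 0 < e by near: e; exact: nbhs_right_gt.
  have eb : e < d / (load_norm (flow_of w) + 1) by near: e; exact: nbhs_right_lt.
  have [_ Phi_le] := reg_minimizer_bounds e0 wmin (vmin e e0).
  apply: le_trans Phi_le _; rewrite lerD2l.
  have : e * (load_norm (flow_of w) + 1) < d by rewrite -ltr_pdivlMr // ltr_pwDr.
  by nra.
apply: (p_adh [set q | load_norm (flow_of q) <= load_norm (flow_of w)]).
  exact/closed_sublevel/load_norm_continuous.
near=> e; have e0 : 0 < e by near: e; exact: nbhs_right_gt.
exact: (reg_minimizer_bounds e0 wmin (vmin e e0)).1.
Unshelve. all: by end_near.
Qed.

End MinNormSelection.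

Section Monotone.
Variables (R : realType) (Res H : finType) (S : H -> {set {set Res}}).
Local Notation V := 'rV[R]_#|{: H * {set Res}}|.
Hypotheses (S_singleton : singleton_game S) (S_nonempty : valid_strategies S).
Variables (c P : Res -> R -> R).
Hypotheses (cvalid : valid_costs c) (PB : forall r, primitive_bounds (c r) (P r)).
Hypothesis Pc : forall r, continuous (P r).

Lemma reg_minimizer_wardrop_eq mu e v : 0 < e ->
  potential_minimizer S (reg_prim P e) mu v -> wardrop_eq (reg_cost c e) S mu (flow_of v).
Proof.
move=> e0; apply: potential_minimizer_wardrop_eq => // [|r].
  exact: reg_cost_valid (ltW e0) cvalid.
exact: primitive_bounds_add_sq (ltW e0) (PB r).
Qed.

Lemma min_norm_minimizer_load_mono mu mu' (w w' : V) :
  nonneg_demand mu -> nonneg_demand mu' -> (forall h, mu h <= mu' h) ->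
  min_norm_minimizer S P mu w -> min_norm_minimizer S P mu' w' ->
  forall r, load S (flow_of w) r <= load S (flow_of w') r.
Proof.
move=> mu0 mu'0 mu_le wmin w'min r.
have Pconv r' := primitive_midpoint_convex (PB r').
have reg_min m : nonneg_demand m -> exists v : R -> V,
    forall e, potential_minimizer S (reg_prim P e) m (v e).
  move=> m0; have [v vmin] := choice (fun e =>
    potential_minimizer_exists S_nonempty (reg_prim_continuous (e:=e) Pc) m0).
  by exists v.
have [[v vmin] [v' v'min]] := (reg_min mu mu0, reg_min mu' mu'0).
pose F := (fun e => (v e, v' e)) @ 0^'+.
have [[p p'] [/= pK p'K] p_adh] :
    exists2 q, (flow_set S mu `*` flow_set S mu') q & forall A, closed A -> F A -> A q.
  apply: compact_filter_cluster; first by apply: compact_setX; exact: flow_set_compact.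
  by apply: nearW => e; split; [exact: (vmin e).1 | exact: (v'min e).1].
have pw := reg_minimizers_cluster_loads Pc Pconv wmin (fun e _ => vmin e) pK
  (fun A cA FA => p_adh _ (closed_preimage_continuous (@fst_continuous _ _) cA) FA).
have pw' := reg_minimizers_cluster_loads Pc Pconv w'min (fun e _ => v'min e) p'K
  (fun A cA FA => p_adh _ (closed_preimage_continuous (@snd_continuous _ _) cA) FA).
rewrite -pw -pw' -subr_le0.
apply: (p_adh [set q | load S (flow_of q.1) r - load S (flow_of q.2) r <= 0]).
  apply: closed_sublevel => q; apply: continuousB.
    apply: (@continuous_comp _ _ _ fst (fun v : V => load S (flow_of v) r)).
      exact: fst_continuous.
    exact: load_continuous.
  apply: (@continuous_comp _ _ _ snd (fun v : V => load S (flow_of v) r)).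
    exact: snd_continuous.
  exact: load_continuous.
apply: (filterS _ (nbhs_right_gt 0)) => e e0.
rewrite /= subr_le0; apply: (wardrop_load_mono S_singleton _ _ _ mu_le).
- by move=> r' a b; exact: reg_cost_increasing e0 cvalid.
- exact: reg_minimizer_wardrop_eq e0 (vmin e).
- exact: reg_minimizer_wardrop_eq e0 (v'min e).
Qed.

End Monotone.

Theorem theorem3p1 (R : realType) (Res H : finType)
    (c : Res -> R -> R) (S : H -> {set {set Res}}) :
  valid_costs c -> valid_strategies S -> singleton_game S ->
  exists x : (H -> R) -> Res -> R, monotone_eq_selection c S x.
Proof.
move=> cvalid S_nonempty S_singleton.
have /choice[P /all_and2[PB Pc]] :
    forall r, exists P, primitive_bounds (c r) P /\ continuous P.
  move=> r; have [cc cmono cpos] := cvalid r.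
  by have [P ? ?] := continuous_primitive_exists cc cmono cpos; exists P.
have /choice[w wmin] : forall mu, exists w : 'rV[R]_#|{: H * {set Res}}|,
    nonneg_demand mu -> min_norm_minimizer S P mu w.
  move=> mu; have [mu0|] := pselect (nonneg_demand mu); last by exists 0.
  by have [w ?] := min_norm_minimizer_exists S_nonempty Pc mu0; exists w.
exists (fun mu => load S (flow_of (w mu))).
split => [mu mu0|r h mu mu' mu0 mu'0 mu_eq mu_le].
  exists (flow_of (w mu)); split => //.
  by apply: potential_minimizer_wardrop_eq (wmin mu mu0).1.
apply: min_norm_minimizer_load_mono (wmin _ mu0) (wmin _ mu'0) r => // h'.
by have [->|/mu_eq->] := eqVneq h' h.
Qed.
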